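(* Assume $\phi$ satisfies (A2) and (A3) and that the gain matrix $V$ is irreducible. Then a point $q\in\mathcal F$ belongs to $\partial\mathcal F$ if and only if there exists a weight vector $w\in\mathbb R_{++}^K$ (i.e. $w>0$ entrywise) such that $q$ maximizes $x\mapsto w^Tx$ over $\mathcal F$.
   Context: Network model: $K\ge 2$ links, $\mathcal K=\{1,\dots,K\}$. Power vectors $p\in\mathbb R_+^K$. Power constraint set $\mathcal P=\{p\in\mathbb R_+^K: Cp\le\hat p\}$, where $C\in\{0,1\}^{N\times K}$ has at least one entry equal to $1$ in each column and $\hat p=(P_1,\dots,P_N)\in\mathbb R_{++}^N$; $\mathcal P_+=\mathcal P\cap\mathbb R_{++}^K$. Gain matrix $V=(v_{k,l})\in\mathbb R_+^{K\times K}$ with zero diagonal, noise vector $z\in\mathbb R_{++}^K$, and $\mathrm{SIR}_k(p)=p_k/((Vp)_k+z_k)$. SIR targets $\gamma_1,\dots,\gamma_K>0$. Assumption (A2): $\phi:\mathbb R_{++}\to\mathbb R$ is continuously differentiable and strictly increasing; let $\mathcal Q=\phi(\mathbb R_{++})$. Assumption (A3): the inverse function $\phi^{-1}:\mathcal Q\to\mathbb R_{++}$ is log-convex. Feasible QoS region: $\mathcal F=\{q\in\mathcal Q^K:\exists p\in\mathcal P_+ \text{ with } q_k=\phi(\mathrm{SIR}_k(p)/\gamma_k)\ \forall k\in\mathcal K\}$; for each $q\in\mathcal F$ the corresponding $p\in\mathcal P_+$ is unique. The boundary $\partial\mathcal F$ is defined as the set of $q\in\mathcal F$ whose corresponding power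 vector $p$ satisfies $Cp\le\hat p$ with equality in at least one component. *)

(* classical reals. Vectors in R^K are functions nat -> R,
   only indices 0..K-1 are meaningful; matrices are nat -> nat -> R. *)
From Stdlib Require Import Reals Lra List.
Open Scope R_scope.

Definition Rsum (n : nat) (f : nat -> R) : R :=
  fold_right Rplus 0 (map f (seq 0 n)).

Definition matvec (K : nat) (V : nat -> nat -> R) (p : nat -> R) (k : nat) : R :=
  Rsum K (fun l => V k l * p l).

Definition SIR (K : nat) (V : nat -> nat -> R) (z p : nat -> R) (k : nat) : R :=
  p k / (matvec K V p k + z k).

Definition in_Pplus (K N : nat) (C : nat -> nat -> R) (phat p : nat -> R) : Prop :=
  (forall k, (k < K)%nat -> 0 < p k) /\
  (forall n, (n < N)%nat -> matvec K C p n <= phat n).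

Definition corresponds (K : nat) (V : nat -> nat -> R) (z gamma : nat -> R)
  (phi : R -> R) (q p : nat -> R) : Prop :=
  forall k, (k < K)%nat -> q k = phi (SIR K V z p k / gamma k).

Definition in_F (K N : nat) (C : nat -> nat -> R) (phat : nat -> R)
  (V : nat -> nat -> R) (z gamma : nat -> R) (phi : R -> R) (q : nat -> R) : Prop :=
  exists p, in_Pplus K N C phat p /\ corresponds K V z gamma phi q p.

Definition in_boundaryF (K N : nat) (C : nat -> nat -> R) (phat : nat -> R)
  (V : nat -> nat -> R) (z gamma : nat -> R) (phi : R -> R) (q : nat -> R) : Prop :=
  exists p, in_Pplus K N C phat p /\ corresponds K V z gamma phi q p /\
    exists n, (n < N)%nat /\ matvec K C p n = phat n.

Definition A2 (phi : R -> R) : Prop :=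
  (exists dphi : R -> R,
      (forall x, 0 < x -> derivable_pt_lim phi x (dphi x)) /\
      (forall x, 0 < x -> continuity_pt dphi x)) /\
  (forall x y, 0 < x -> x < y -> phi x < phi y).

(* (A3): phi^{-1} : Q -> R_{++} is log-convex, Q = phi(R_{++}).  Since phi is
   injective on R_{++}, phi^{-1}(s) = y iff phi y = s (y > 0). Log-convexity:
   Q is convex and log phi^{-1}(t a + (1-t) b) <= t log phi^{-1} a + (1-t) log phi^{-1} b. *)
Definition A3 (phi : R -> R) : Prop :=
  forall x1 x2 t, 0 < x1 -> 0 < x2 -> 0 <= t <= 1 ->
    exists y, 0 < y /\ phi y = t * phi x1 + (1 - t) * phi x2 /\
              ln y <= t * ln x1 + (1 - t) * ln x2.

Inductive reach (K : nat) (V : nat -> nat -> R) : nat -> nat -> Prop :=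
| reach_step : forall i j, (i < K)%nat -> (j < K)%nat -> 0 < V i j -> reach K V i j
| reach_trans : forall i j l, reach K V i j -> reach K V j l -> reach K V i l.

Definition irreducible (K : nat) (V : nat -> nat -> R) : Prop :=
  forall i j, (i < K)%nat -> (j < K)%nat -> i <> j -> reach K V i j.

From Stdlib Require Import Reals Lra Lia List Classical ClassicalEpsilon.
Open Scope R_scope.

(* (<-) If no power constraint is active at the power vector p of q, the scaled vector
   (1 + e) p is still feasible for some e > 0 and, the noise being positive, strictly
   increases every SIR and hence every q_k; so q maximises no positive weighting.

   (->) Let constraint n be active at p and put c = C_n >= 0.  Three facts combine:
   * (A2)+(A3) make u |-> phi (exp u) concave and differentiable, so
     phi a' <= phi a + D (ln a' - ln a) with D = a phi'(a) > 0;
   * convexity of log-sum-exp bounds the change of ln I_k, I_k = (V p)_k + z_k;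
   * the nonnegative matrix A_kl = SIR_k(p) V_kl satisfies A p <= (1 - beta) p, so the
     Neumann series solves y = c + y A with y >= c, and irreducibility of V makes y > 0.
   With w_k = y_k p_k / D_k one gets, for every feasible x with power vector p',
     w.x - w.q <= sum_k y_k p_k (ln SIR_k(p') - ln SIR_k(p)) <= (C p')_n - (C p)_n <= 0. *)

Lemma Rsum_0 f : Rsum 0 f = 0.
Proof. reflexivity. Qed.

Lemma Rsum_S n f : Rsum (S n) f = Rsum n f + f n.
Proof.
  unfold Rsum. rewrite seq_S, map_app, fold_right_app. simpl.
  induction (map f (seq 0 n)) as [|a l IH]; simpl; [lra | rewrite IH; lra].
Qed.

Lemma Rsum_ext n f g : (forall i, (i < n)%nat -> f i = g i) -> Rsum n f = Rsum n g.
Proof.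
  induction n as [|n IH]; intros H; [reflexivity|].
  rewrite !Rsum_S, IH, H; auto.
Qed.

Lemma Rsum_le n f g : (forall i, (i < n)%nat -> f i <= g i) -> Rsum n f <= Rsum n g.
Proof.
  induction n as [|n IH]; intros H; [rewrite !Rsum_0; lra|].
  rewrite !Rsum_S. assert (f n <= g n) by auto. assert (Rsum n f <= Rsum n g) by auto. lra.
Qed.

Lemma Rsum_lt n f g :
  (0 < n)%nat -> (forall i, (i < n)%nat -> f i < g i) -> Rsum n f < Rsum n g.
Proof.
  intros Hn H. destruct n as [|n]; [lia|]. rewrite !Rsum_S.
  assert (Rsum n f <= Rsum n g) by (apply Rsum_le; intros; apply Rlt_le; auto).
  assert (f n < g n) by auto. lra.
Qed.

Lemma Rsum_plus n f g : Rsum n (fun i => f i + g i) = Rsum n f + Rsum n g.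
Proof. induction n as [|n IH]; [rewrite !Rsum_0; lra|]. rewrite !Rsum_S, IH; lra. Qed.

Lemma Rsum_minus n f g : Rsum n (fun i => f i - g i) = Rsum n f - Rsum n g.
Proof. induction n as [|n IH]; [rewrite !Rsum_0; lra|]. rewrite !Rsum_S, IH; lra. Qed.

Lemma Rsum_scal n a f : Rsum n (fun i => a * f i) = a * Rsum n f.
Proof. induction n as [|n IH]; [rewrite !Rsum_0; lra|]. rewrite !Rsum_S, IH; lra. Qed.

Lemma Rsum_scal_r n a f : Rsum n f * a = Rsum n (fun i => f i * a).
Proof.
  rewrite Rmult_comm, <- Rsum_scal. apply Rsum_ext. intros. ring.
Qed.

Lemma Rsum_zero n f : (forall i, (i < n)%nat -> f i = 0) -> Rsum n f = 0.
Proof.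
  induction n as [|n IH]; intros H; [reflexivity|]. rewrite Rsum_S, IH, H; auto; lra.
Qed.

Lemma Rsum_nonneg n f : (forall i, (i < n)%nat -> 0 <= f i) -> 0 <= Rsum n f.
Proof.
  intros H. rewrite <- (Rsum_zero n (fun _ => 0)) by auto. apply Rsum_le; auto.
Qed.

Lemma Rsum_term_le n f j :
  (forall i, (i < n)%nat -> 0 <= f i) -> (j < n)%nat -> f j <= Rsum n f.
Proof.
  induction n as [|n IH]; intros H Hj; [lia|]. rewrite Rsum_S.
  destruct (Nat.eq_dec j n) as [->|Hne].
  - assert (0 <= Rsum n f) by (apply Rsum_nonneg; auto). lra.
  - assert (f j <= Rsum n f) by (apply IH; auto; lia). assert (0 <= f n) by auto. lra.
Qed.

Lemma Rsum_pos_term n f : 0 < Rsum n f -> exists i, (i < n)%nat /\ 0 < f i.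
Proof.
  intros H. apply NNPP. intros Hno.
  assert (Rsum n f <= 0); [|lra].
  rewrite <- (Rsum_zero n (fun _ => 0)) by auto. apply Rsum_le. intros i Hi.
  apply Rnot_lt_le. intros Hfi. apply Hno. exists i; auto.
Qed.

Lemma Rsum_swap n m (f : nat -> nat -> R) :
  Rsum n (fun k => Rsum m (fun l => f k l)) = Rsum m (fun l => Rsum n (fun k => f k l)).
Proof.
  induction n as [|n IH].
  - symmetry. apply Rsum_zero. reflexivity.
  - rewrite Rsum_S, IH, <- Rsum_plus. apply Rsum_ext. intros. rewrite Rsum_S. reflexivity.
Qed.

Lemma cv_const a : Un_cv (fun _ => a) a.
Proof.
  intros e He. exists 0%nat. intros. unfold R_dist. rewrite Rminus_diag, Rabs_R0. exact He.
Qed.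

Lemma Rsum_cv n (u : nat -> nat -> R) (l : nat -> R) :
  (forall i, (i < n)%nat -> Un_cv (fun m => u m i) (l i)) ->
  Un_cv (fun m => Rsum n (u m)) (Rsum n l).
Proof.
  induction n as [|n IH]; intros H; [exact (cv_const 0)|].
  rewrite Rsum_S. apply Un_cv_ext with (fun m => Rsum n (u m) + u m n).
  - intros m. symmetry. apply Rsum_S.
  - apply CV_plus; [apply IH; auto | apply H; lia].
Qed.

Lemma finite_pos_lower_bound n (f : nat -> R) :
  (forall i, (i < n)%nat -> 0 < f i) ->
  exists b, 0 < b <= 1 /\ forall i, (i < n)%nat -> b <= f i.
Proof.
  induction n as [|n IH]; intros H.
  - exists 1. split; [lra | intros; lia].
  - destruct IH as [b [Hb Hbf]]; [intros; apply H; lia|].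
    exists (Rmin b (f n)). pose proof (Rmin_l b (f n)). pose proof (Rmin_r b (f n)). split.
    + split; [apply Rmin_glb_lt; [lra | apply H; lia] | lra].
    + intros i Hi. destruct (Nat.eq_dec i n) as [->|Hne]; [lra|].
      pose proof (Hbf i ltac:(lia)). lra.
Qed.

(* If the nonnegative matrix A admits a positive vector p with
   A p <= (1 - beta) p, beta > 0 (so its spectral radius is < 1), then for every
   c >= 0 the row equation y = c + y A has a solution y >= c, namely the limit of
   the increasing partial sums c + cA + ... + cA^m. *)
Section NeumannSeries.

Variables (K : nat) (A : nat -> nat -> R) (c p : nat -> R) (beta : R).
Hypothesis HA : forall k j, (k < K)%nat -> (j < K)%nat -> 0 <= A k j.
Hypothesis Hp : forall k, (k < K)%nat -> 0 < p k.
Hypothesis Hc : forall k, (k < K)%nat -> 0 <= c k.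
Hypothesis Hbeta : 0 < beta <= 1.
Hypothesis Hsub : forall k, (k < K)%nat -> Rsum K (fun j => A k j * p j) <= (1 - beta) * p k.

Fixpoint neumann (m : nat) (j : nat) : R :=
  match m with
  | O => 0
  | S m' => c j + Rsum K (fun k => neumann m' k * A k j)
  end.

Lemma neumann_mono m j : (j < K)%nat -> 0 <= neumann m j <= neumann (S m) j.
Proof.
  revert j. induction m as [|m IH]; intros j Hj.
  - change (0 <= 0 <= c j + Rsum K (fun k => 0 * A k j)).
    rewrite Rsum_zero by (intros; ring). pose proof (Hc j Hj). lra.
  - destruct (IH j Hj) as [H0 H1]. split; [lra|].
    change (c j + Rsum K (fun k => neumann m k * A k j)
            <= c j + Rsum K (fun k => neumann (S m) k * A k j)).
    apply Rplus_le_compat_l, Rsum_le. intros k Hk.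
    apply Rmult_le_compat_r; [apply HA; auto | apply IH; auto].
Qed.

Lemma neumann_bound m :
  Rsum K (fun j => neumann m j * p j) <= Rsum K (fun j => c j * p j) / beta.
Proof.
  set (B := Rsum K (fun j => c j * p j)).
  assert (HB : 0 <= B).
  { apply Rsum_nonneg. intros j Hj. pose proof (Hc j Hj). pose proof (Hp j Hj). nra. }
  induction m as [|m IH].
  - rewrite Rsum_zero by (intros; simpl; ring). apply Rmult_le_pos; [lra|].
    apply Rlt_le, Rinv_0_lt_compat. lra.
  - assert (Hsplit : Rsum K (fun j => neumann (S m) j * p j)
                     = B + Rsum K (fun k => neumann m k * Rsum K (fun j => A k j * p j))).
    { change (Rsum K (fun j => (c j + Rsum K (fun k => neumann m k * A k j)) * p j)
              = B + Rsum K (fun k => neumann m k * Rsum K (fun j => A k j * p j))).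
      rewrite (Rsum_ext K _ (fun j => c j * p j + Rsum K (fun k => neumann m k * A k j * p j)))
        by (intros; rewrite Rmult_plus_distr_r, Rsum_scal_r; reflexivity).
      rewrite Rsum_plus, Rsum_swap. f_equal. apply Rsum_ext. intros k _.
      rewrite <- Rsum_scal. apply Rsum_ext. intros. ring. }
    assert (Hcontr : Rsum K (fun k => neumann m k * Rsum K (fun j => A k j * p j))
                     <= (1 - beta) * Rsum K (fun k => neumann m k * p k)).
    { rewrite <- Rsum_scal. apply Rsum_le. intros k Hk.
      pose proof (Hsub k Hk). pose proof (proj1 (neumann_mono m k Hk)). nra. }
    assert ((1 - beta) * Rsum K (fun k => neumann m k * p k) <= (1 - beta) * (B / beta))
      by (apply Rmult_le_compat_l; lra).
    assert (B + (1 - beta) * (B / beta) = B / beta) by (field; lra).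
    lra.
Qed.

Lemma neumann_cv :
  exists y : nat -> R, forall j, (j < K)%nat -> Un_cv (fun m => neumann m j) (y j).
Proof.
  apply (choice (fun j l => (j < K)%nat -> Un_cv (fun m => neumann m j) l)). intros j.
  destruct (Nat.lt_ge_cases j K) as [Hj|Hj]; [|exists 0; intros; lia].
  assert (Hub : has_ub (fun m => neumann m j)).
  { exists (Rsum K (fun i => c i * p i) / beta / p j). intros x [m ->].
    pose proof (Hp j Hj). apply (Rmult_le_reg_r (p j)); [lra|].
    replace (Rsum K (fun i => c i * p i) / beta / p j * p j)
      with (Rsum K (fun i => c i * p i) / beta) by (field; lra).
    eapply Rle_trans; [|apply (neumann_bound m)].
    apply (Rsum_term_le K (fun i => neumann m i * p i)); auto.
    intros i Hi. pose proof (proj1 (neumann_mono m i Hi)). pose proof (Hp i Hi). nra. }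
  destruct (growing_cv _ (fun m => proj2 (neumann_mono m j Hj)) Hub) as [l Hl].
  exists l. auto.
Qed.

Lemma neumann_fixpoint :
  exists y : nat -> R, (forall j, (j < K)%nat -> c j <= y j) /\
    forall j, (j < K)%nat -> y j = c j + Rsum K (fun k => y k * A k j).
Proof.
  destruct neumann_cv as [y Hy]. exists y. split; intros j Hj.
  - pose proof (growing_ineq _ _ (fun m => proj2 (neumann_mono m j Hj)) (Hy j Hj) 1%nat) as H1.
    change (c j + Rsum K (fun k => 0 * A k j) <= y j) in H1.
    rewrite Rsum_zero in H1 by (intros; ring). lra.
  - apply (UL_sequence (fun m => neumann (S m) j)).
    + intros e He. destruct (Hy j Hj e He) as [M HM]. exists M. intros m Hm. apply HM. lia.
    + change (Un_cv (fun m => c j + Rsum K (fun k => neumann m k * A k j))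
                    (c j + Rsum K (fun k => y k * A k j))).
      apply (CV_plus (fun _ => c j)); [apply cv_const|].
      apply (Rsum_cv K (fun m k => neumann m k * A k j) (fun k => y k * A k j)).
      intros k Hk. apply (CV_mult (fun m => neumann m k) (fun _ => A k j));
        [apply Hy; auto | apply cv_const].
Qed.

End NeumannSeries.

Lemma fixpoint_reach_pos K (V A : nat -> nat -> R) (c y : nat -> R) :
  (forall k j, (k < K)%nat -> (j < K)%nat -> 0 <= A k j) ->
  (forall k j, (k < K)%nat -> (j < K)%nat -> 0 < V k j -> 0 < A k j) ->
  (forall j, (j < K)%nat -> 0 <= c j <= y j) ->
  (forall j, (j < K)%nat -> y j = c j + Rsum K (fun k => y k * A k j)) ->
  forall i j, reach K V i j -> 0 < y i -> 0 < y j.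
Proof.
  intros HA HVA Hy Hfix i j Hr.
  induction Hr as [i j Hi Hj HVij | i j l _ IH1 _ IH2]; [|auto].
  intros Hyi. rewrite Hfix by exact Hj.
  assert (y i * A i j <= Rsum K (fun k => y k * A k j)).
  { apply (Rsum_term_le K (fun k => y k * A k j)); auto.
    intros k Hk. pose proof (Hy k Hk). pose proof (HA k j Hk Hj). nra. }
  assert (0 < y i * A i j) by (apply Rmult_lt_0_compat; auto).
  pose proof (Hy j Hj). lra.
Qed.

Definition concave (h : R -> R) : Prop :=
  forall u1 u2 t, 0 <= t <= 1 -> t * h u1 + (1 - t) * h u2 <= h (t * u1 + (1 - t) * u2).

Lemma concave_tangent (h : R -> R) u D :
  concave h -> derivable_pt_lim h u D -> forall u', h u' <= h u + D * (u' - u).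
Proof.
  intros Hconc Hder u'. destruct (Req_dec u' u) as [->|Hne]; [lra|].
  apply Rnot_lt_le. intros Habove.
  set (d := u' - u). set (g := h u' - h u - D * d).
  assert (Hd : 0 < Rabs d) by (apply Rabs_pos_lt; unfold d; lra).
  assert (Hg : 0 < g) by (unfold g, d; lra).
  destruct (Hder (g / Rabs d)) as [del Hdel]; [apply Rdiv_lt_0_compat; auto|].
  (* a step t * d along the chord, small enough for the derivative estimate *)
  set (t := Rmin (1/2) (del / (2 * Rabs d))).
  assert (Ht : 0 < t <= 1/2).
  { split; [apply Rmin_glb_lt; [lra | apply Rdiv_lt_0_compat; [apply cond_pos | lra]] | apply Rmin_l]. }
  assert (Htd : t * d <> 0) by (apply Rmult_integral_contrapositive; split; unfold d; lra).
  assert (Hsmall : Rabs (t * d) < del).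
  { rewrite Rabs_mult, (Rabs_pos_eq t) by lra.
    assert (t * Rabs d <= del / (2 * Rabs d) * Rabs d)
      by (apply Rmult_le_compat_r; [lra | apply Rmin_r]).
    assert (del / (2 * Rabs d) * Rabs d = del / 2) by (field; lra).
    pose proof (cond_pos del). lra. }
  set (Q := (h (u + t * d) - h u) / (t * d)).
  assert (HQ : h (u + t * d) - h u = Q * (t * d)) by (unfold Q; field; unfold d; split; lra).
  (* concavity: the chord slope Q exceeds the secant slope to u', i.e. (Q - D) d >= g *)
  assert (Hchord : t * h u' + (1 - t) * h u <= h (u + t * d)).
  { replace (u + t * d) with (t * u' + (1 - t) * u) by (unfold d; ring). apply Hconc. lra. }
  assert (Hslope : t * g <= t * ((Q - D) * d)).
  { replace (t * ((Q - D) * d)) with (Q * (t * d) - t * D * d) by ring.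
    rewrite <- HQ. unfold g. lra. }
  apply Rmult_le_reg_l in Hslope; [|lra].
  (* ... while the derivative estimate gives |Q - D| |d| < g *)
  specialize (Hdel (t * d) Htd Hsmall). fold Q in Hdel.
  assert ((Q - D) * d <= Rabs (Q - D) * Rabs d) by (rewrite <- Rabs_mult; apply Rle_abs).
  assert (Rabs (Q - D) * Rabs d < g / Rabs d * Rabs d) by (apply Rmult_lt_compat_r; auto).
  assert (g / Rabs d * Rabs d = g) by (field; lra).
  lra.
Qed.

Lemma exp_phi_concave (phi : R -> R) :
  (forall x y, 0 < x -> x < y -> phi x < phi y) -> A3 phi -> concave (fun u => phi (exp u)).
Proof.
  intros Hmon HA3 u1 u2 t Ht. cbv beta.
  destruct (HA3 (exp u1) (exp u2) t (exp_pos _) (exp_pos _) Ht) as [y [Hy [Hphiy Hlny]]].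
  rewrite <- Hphiy. rewrite !ln_exp in Hlny.
  destruct Hlny as [Hlt|Heq].
  - left. apply Hmon; [exact Hy|]. rewrite <- (exp_ln y) by exact Hy. apply exp_increasing, Hlt.
  - rewrite <- Heq, exp_ln by exact Hy. lra.
Qed.

Lemma phi_log_tangent (phi dphi : R -> R) :
  (forall x, 0 < x -> derivable_pt_lim phi x (dphi x)) ->
  (forall x y, 0 < x -> x < y -> phi x < phi y) -> A3 phi ->
  forall a, 0 < a -> 0 < dphi a * a /\
    forall a', 0 < a' -> phi a' <= phi a + dphi a * a * (ln a' - ln a).
Proof.
  intros Hd Hmon HA3 a Ha.
  set (h := fun u => phi (exp u)).
  assert (Hder : derivable_pt_lim h (ln a) (dphi a * a)).
  { pose proof (derivable_pt_lim_comp exp phi (ln a) (exp (ln a)) (dphi a)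
                  (derivable_pt_lim_exp (ln a))) as H.
    rewrite exp_ln in H by exact Ha. exact (H (Hd a Ha)). }
  pose proof (concave_tangent h (ln a) _ (exp_phi_concave phi Hmon HA3) Hder) as Htan.
  split.
  - assert (h (ln a) < h (ln a + 1)).
    { apply Hmon; [apply exp_pos | apply exp_increasing; lra]. }
    pose proof (Htan (ln a + 1)). lra.
  - intros a' Ha'. pose proof (Htan (ln a')) as H. unfold h in H.
    rewrite !exp_ln in H by auto. exact H.
Qed.

Lemma ln_le_sub1 x : 0 < x -> ln x <= x - 1.
Proof. intros Hx. pose proof (exp_ineq1_le (ln x)). rewrite exp_ln in H by exact Hx. lra. Qed.

Lemma ln_div x y : 0 < x -> 0 < y -> ln (x / y) = ln x - ln y.
Proof.
  intros Hx Hy. unfold Rdiv. rewrite ln_mult, ln_Rinv; auto. apply Rinv_0_lt_compat, Hy.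
Qed.

(* The tangent bound rescaled by Y / D, Y >= 0: in terms of the ratios a = s / g and
   a' = s' / g it trades a gain in phi for the change of ln s. *)
Lemma weighted_phi_tangent (phi dphi : R -> R) :
  (forall x, 0 < x -> derivable_pt_lim phi x (dphi x)) ->
  (forall x y, 0 < x -> x < y -> phi x < phi y) -> A3 phi ->
  forall Y s s' g, 0 <= Y -> 0 < s -> 0 < s' -> 0 < g ->
  Y / (dphi (s / g) * (s / g)) * phi (s' / g)
  <= Y / (dphi (s / g) * (s / g)) * phi (s / g) + Y * (ln s' - ln s).
Proof.
  intros Hd Hmon HA3 Y s s' g HY Hs Hs' Hg.
  destruct (phi_log_tangent phi dphi Hd Hmon HA3 (s / g) (Rdiv_lt_0_compat _ _ Hs Hg))
    as [HD Htan].
  specialize (Htan (s' / g) (Rdiv_lt_0_compat _ _ Hs' Hg)).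
  rewrite !ln_div in Htan by auto.
  set (D := dphi (s / g) * (s / g)) in *.
  apply (Rmult_le_compat_l (Y / D)) in Htan; [|apply Rmult_le_pos; [lra | apply Rlt_le, Rinv_0_lt_compat, HD]].
  replace (Y * (ln s' - ln s)) with (Y / D * (D * (ln s' - ln g - (ln s - ln g)))) by (field; lra).
  lra.
Qed.

Lemma mul_ln_ratio_le a b : 0 < a -> 0 < b -> a * (ln b - ln a) <= b - a.
Proof.
  intros Ha Hb. rewrite <- ln_div by auto.
  pose proof (ln_le_sub1 (b / a) (Rdiv_lt_0_compat _ _ Hb Ha)).
  replace (b - a) with (a * (b / a - 1)) by (field; lra).
  apply Rmult_le_compat_l; lra.
Qed.

(* Jensen's inequality for ln with weights a0 > 0 (at the point 1) and a_i >= 0: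
   sum a_i ln x_i <= ln (a0 + sum a_i x_i). *)
Lemma ln_jensen n (a x : nat -> R) (a0 : R) :
  0 < a0 -> (forall i, (i < n)%nat -> 0 <= a i) -> (forall i, (i < n)%nat -> 0 < x i) ->
  a0 + Rsum n a = 1 ->
  Rsum n (fun i => a i * ln (x i)) <= ln (a0 + Rsum n (fun i => a i * x i)).
Proof.
  intros Ha0 Ha Hx Hsum. set (m := a0 + Rsum n (fun i => a i * x i)).
  assert (Hm : 0 < m).
  { assert (0 <= Rsum n (fun i => a i * x i)); [|unfold m; lra].
    apply Rsum_nonneg. intros i Hi. pose proof (Ha i Hi). pose proof (Hx i Hi). nra. }
  (* the tangent of ln at m: ln x <= ln m + x / m - 1 *)
  apply Rle_trans with (Rsum n (fun i => (ln m - 1) * a i + / m * (a i * x i))).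
  { apply Rsum_le. intros i Hi.
    pose proof (ln_le_sub1 (x i / m) (Rdiv_lt_0_compat _ _ (Hx i Hi) Hm)) as H.
    rewrite ln_div in H by auto.
    replace ((ln m - 1) * a i + / m * (a i * x i)) with (a i * (ln m + (x i / m - 1)))
      by (field; lra).
    apply Rmult_le_compat_l; [auto | lra]. }
  rewrite Rsum_plus, !Rsum_scal.
  replace (Rsum n a) with (1 - a0) by lra.
  replace (Rsum n (fun i => a i * x i)) with (m - a0) by (unfold m; ring).
  pose proof (ln_le_sub1 (/ m) (Rinv_0_lt_compat _ Hm)) as H. rewrite ln_Rinv in H by exact Hm.
  assert (a0 * - ln m <= a0 * (/ m - 1)) by (apply Rmult_le_compat_l; lra).
  replace (/ m * (m - a0)) with (1 - a0 * / m) by (field; lra).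
  lra.
Qed.

Lemma log_interference_convex n (v p p' : nat -> R) (z : R) :
  (forall l, (l < n)%nat -> 0 <= v l) -> (forall l, (l < n)%nat -> 0 < p l) ->
  (forall l, (l < n)%nat -> 0 < p' l) -> 0 < z ->
  Rsum n (fun l => v l * p l / (Rsum n (fun l => v l * p l) + z) * (ln (p' l) - ln (p l)))
  <= ln (Rsum n (fun l => v l * p' l) + z) - ln (Rsum n (fun l => v l * p l) + z).
Proof.
  intros Hv Hp Hp' Hz.
  set (I := Rsum n (fun l => v l * p l) + z). set (I' := Rsum n (fun l => v l * p' l) + z).
  assert (HI : 0 < I).
  { assert (0 <= Rsum n (fun l => v l * p l)); [|unfold I; lra].
    apply Rsum_nonneg. intros l Hl. pose proof (Hv l Hl). pose proof (Hp l Hl). nra. }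
  assert (HI' : 0 < I').
  { assert (0 <= Rsum n (fun l => v l * p' l)); [|unfold I'; lra].
    apply Rsum_nonneg. intros l Hl. pose proof (Hv l Hl). pose proof (Hp' l Hl). nra. }
  assert (Hweights : z / I + Rsum n (fun l => v l * p l / I) = 1).
  { rewrite (Rsum_ext n _ (fun l => / I * (v l * p l))) by (intros; field; lra).
    rewrite Rsum_scal. replace (Rsum n (fun l => v l * p l)) with (I - z) by (unfold I; ring).
    field. lra. }
  assert (Hmean : z / I + Rsum n (fun l => v l * p l / I * (p' l / p l)) = I' / I).
  { rewrite (Rsum_ext n _ (fun l => / I * (v l * p' l))).
    - rewrite Rsum_scal. unfold I'. field. lra.
    - intros l Hl. pose proof (Hp l Hl). field. lra. }
  rewrite <- ln_div, <- Hmean by auto.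
  eapply Rle_trans; [|apply ln_jensen; auto].
  - right. apply Rsum_ext. intros l Hl. rewrite ln_div; auto.
  - apply Rdiv_lt_0_compat; auto.
  - intros l Hl. pose proof (Hv l Hl). pose proof (Hp l Hl).
    apply Rmult_le_pos; [nra | apply Rlt_le, Rinv_0_lt_compat, HI].
  - intros l Hl. apply Rdiv_lt_0_compat; auto.
Qed.

Lemma matvec_nonneg K (M : nat -> nat -> R) p k :
  (forall l, (l < K)%nat -> 0 <= M k l) -> (forall l, (l < K)%nat -> 0 <= p l) ->
  0 <= matvec K M p k.
Proof.
  intros HM Hp. apply Rsum_nonneg. intros l Hl. pose proof (HM l Hl). pose proof (Hp l Hl). nra.
Qed.

Lemma matvec_scal K (M : nat -> nat -> R) a p k :
  matvec K M (fun l => a * p l) k = a * matvec K M p k.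
Proof. unfold matvec. rewrite <- Rsum_scal. apply Rsum_ext. intros. ring. Qed.

Section Interference.

Variables (K : nat) (V : nat -> nat -> R) (z : nat -> R).
Hypothesis HVnn : forall k l, (k < K)%nat -> (l < K)%nat -> 0 <= V k l.
Hypothesis Hz : forall k, (k < K)%nat -> 0 < z k.

Definition interference (p : nat -> R) (k : nat) : R := matvec K V p k + z k.

Lemma interference_pos p k :
  (forall l, (l < K)%nat -> 0 < p l) -> (k < K)%nat -> 0 < interference p k.
Proof.
  intros Hp Hk. unfold interference.
  assert (0 <= matvec K V p k); [|pose proof (Hz k Hk); lra].
  apply matvec_nonneg; [intros; apply HVnn; auto | intros l Hl; apply Rlt_le, Hp, Hl].
Qed.

Lemma SIR_pos p k : (forall l, (l < K)%nat -> 0 < p l) -> (k < K)%nat -> 0 < SIR K V z p k.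
Proof. intros Hp Hk. apply Rdiv_lt_0_compat; [auto | apply interference_pos; auto]. Qed.

Lemma ln_SIR p k : (forall l, (l < K)%nat -> 0 < p l) -> (k < K)%nat ->
  ln (SIR K V z p k) = ln (p k) - ln (interference p k).
Proof. intros Hp Hk. apply ln_div; [auto | apply interference_pos; auto]. Qed.

(* Scaling all powers up by 1 + e strictly increases every SIR, because z > 0. *)
Lemma SIR_scale_lt p e k : (forall l, (l < K)%nat -> 0 < p l) -> 0 < e -> (k < K)%nat ->
  SIR K V z p k < SIR K V z (fun l => (1 + e) * p l) k.
Proof.
  intros Hp He Hk. unfold SIR. rewrite matvec_scal.
  set (M := matvec K V p k).
  assert (HM : 0 <= M).
  { apply matvec_nonneg; [intros; apply HVnn; auto | intros l Hl; apply Rlt_le, Hp, Hl]. }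
  pose proof (Hp k Hk). pose proof (Hz k Hk).
  assert (HI : 0 < M + z k) by lra.
  assert (HI' : 0 < (1 + e) * M + z k) by nra.
  assert (E : (1 + e) * p k / ((1 + e) * M + z k) - p k / (M + z k)
              = e * p k * z k / (((1 + e) * M + z k) * (M + z k))) by (field; lra).
  assert (0 < e * p k * z k / (((1 + e) * M + z k) * (M + z k))).
  { apply Rdiv_lt_0_compat; [|apply Rmult_lt_0_compat; lra].
    apply Rmult_lt_0_compat; [apply Rmult_lt_0_compat|]; lra. }
  lra.
Qed.

Lemma dual_log_SIR_bound (p p' c y : nat -> R) :
  (forall l, (l < K)%nat -> 0 < p l) -> (forall l, (l < K)%nat -> 0 < p' l) ->
  (forall l, (l < K)%nat -> 0 <= c l) -> (forall k, (k < K)%nat -> 0 <= y k) ->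
  (forall l, (l < K)%nat -> y l = c l + Rsum K (fun k => y k * (SIR K V z p k * V k l))) ->
  Rsum K (fun k => y k * p k * (ln (SIR K V z p' k) - ln (SIR K V z p k)))
  <= Rsum K (fun l => c l * p' l) - Rsum K (fun l => c l * p l).
Proof.
  intros Hp Hp' Hc Hy Hfix.
  (* convexity of log-interference, row by row *)
  apply Rle_trans with (Rsum K (fun k => y k * p k * (ln (p' k) - ln (p k))
     - Rsum K (fun l => y k * p k * (V k l * p l / interference p k) * (ln (p' l) - ln (p l))))).
  { apply Rsum_le. intros k Hk. rewrite !ln_SIR by auto.
    pose proof (log_interference_convex K (V k) p p' (z k)
                  (fun l Hl => HVnn k l Hk Hl) Hp Hp' (Hz k Hk)) as Hlse.
    change (Rsum K (fun l => V k l * p l)) with (matvec K V p k) in Hlse.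
    change (Rsum K (fun l => V k l * p' l)) with (matvec K V p' k) in Hlse.
    change (matvec K V p k + z k) with (interference p k) in Hlse.
    change (matvec K V p' k + z k) with (interference p' k) in Hlse.
    assert (Hw : 0 <= y k * p k) by (pose proof (Hy k Hk); pose proof (Hp k Hk); nra).
    apply (Rmult_le_compat_l (y k * p k)) in Hlse; [|exact Hw].
    rewrite <- Rsum_scal in Hlse.
    rewrite (Rsum_ext K (fun l => y k * p k * (V k l * p l / interference p k) * _))
      with (g := fun l => y k * p k * (V k l * p l / interference p k * (ln (p' l) - ln (p l))))
      by (intros; ring).
    lra. }
  (* exchange the order of summation and use the fixed-point equation *)
  rewrite Rsum_minus, Rsum_swap, <- Rsum_minus, <- Rsum_minus.
  apply Rsum_le. intros l Hl.
  rewrite (Rsum_ext K _ (fun k => p l * (ln (p' l) - ln (p l)) * (y k * (SIR K V z p k * V k l)))).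
  2: { intros k Hk. pose proof (interference_pos p k Hp Hk).
       unfold SIR. fold (interference p k). field. lra. }
  rewrite Rsum_scal.
  replace (Rsum K (fun k => y k * (SIR K V z p k * V k l))) with (y l - c l) by (rewrite (Hfix l Hl); ring).
  pose proof (mul_ln_ratio_le (p l) (p' l) (Hp l Hl) (Hp' l Hl)).
  pose proof (Hc l Hl). nra.
Qed.

(* The matrix
   A_kl = SIR_k(p) V_kl satisfies A p = p - (z_k / I_k) p <= (1 - beta) p, so the Neumann
   series applies. *)
Lemma dual_certificate (p c : nat -> R) (j0 : nat) :
  irreducible K V ->
  (forall l, (l < K)%nat -> 0 < p l) -> (forall l, (l < K)%nat -> 0 <= c l) ->
  (j0 < K)%nat -> 0 < c j0 ->
  exists y : nat -> R, (forall k, (k < K)%nat -> 0 < y k) /\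
    forall l, (l < K)%nat -> y l = c l + Rsum K (fun k => y k * (SIR K V z p k * V k l)).
Proof.
  intros Hirr Hp Hc Hj0 Hcj0.
  set (A := fun k l => SIR K V z p k * V k l).
  assert (HA : forall k l, (k < K)%nat -> (l < K)%nat -> 0 <= A k l).
  { intros k l Hk Hl. pose proof (SIR_pos p k Hp Hk). pose proof (HVnn k l Hk Hl). unfold A. nra. }
  destruct (finite_pos_lower_bound K (fun k => z k / interference p k)) as [beta [Hbeta Hbk]].
  { intros k Hk. apply Rdiv_lt_0_compat; [auto | apply interference_pos; auto]. }
  assert (Hsub : forall k, (k < K)%nat -> Rsum K (fun j => A k j * p j) <= (1 - beta) * p k).
  { intros k Hk. unfold A.
    rewrite (Rsum_ext K _ (fun j => SIR K V z p k * (V k j * p j))) by (intros; ring).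
    rewrite Rsum_scal. fold (matvec K V p k).
    pose proof (interference_pos p k Hp Hk). pose proof (Hbk k Hk). pose proof (Hp k Hk).
    replace (SIR K V z p k * matvec K V p k) with (p k * (1 - z k / interference p k))
      by (unfold SIR, interference in *; field; lra).
    nra. }
  destruct (neumann_fixpoint K A c p beta HA Hp Hc Hbeta Hsub) as [y [Hyc Hfix]].
  assert (Hy : forall k, (k < K)%nat -> 0 <= c k <= y k) by (intros k Hk; split; auto).
  exists y. split; [|exact Hfix].
  intros k Hk. pose proof (Hyc j0 Hj0).
  destruct (Nat.eq_dec j0 k) as [<-|Hne]; [lra|].
  apply (fixpoint_reach_pos K V A c y HA) with j0; auto; [|lra].
  intros i j Hi Hj HV. pose proof (SIR_pos p i Hp Hi). unfold A. nra.
Qed.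

End Interference.

(* (->) At a boundary point, with n an active constraint and y the dual certificate for
   c = C_n, the weights w_k = y_k p_k / (a_k phi'(a_k)), a_k = SIR_k(p) / gamma_k, make q a
   maximiser: the tangent bound for phi and the dual bound give
   w.x - w.q <= sum_k y_k p_k (ln SIR_k(p') - ln SIR_k(p)) <= (C p')_n - (C p)_n <= 0. *)
Lemma boundary_point_maximises (K N : nat) (C : nat -> nat -> R) (phat : nat -> R)
  (V : nat -> nat -> R) (z gamma : nat -> R) (phi : R -> R)
  (HC01 : forall n k, (n < N)%nat -> (k < K)%nat -> C n k = 0 \/ C n k = 1)
  (Hphat : forall n, (n < N)%nat -> 0 < phat n)
  (HVnn : forall k l, (k < K)%nat -> (l < K)%nat -> 0 <= V k l)
  (Hz : forall k, (k < K)%nat -> 0 < z k)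
  (Hgamma : forall k, (k < K)%nat -> 0 < gamma k)
  (HA2 : A2 phi) (HA3 : A3 phi) (Hirr : irreducible K V) (q : nat -> R) :
  in_boundaryF K N C phat V z gamma phi q ->
  exists w : nat -> R, (forall k, (k < K)%nat -> 0 < w k) /\
    forall x, in_F K N C phat V z gamma phi x ->
      Rsum K (fun k => w k * x k) <= Rsum K (fun k => w k * q k).
Proof.
  intros [p [[Hp HpC] [Hcor [n [Hn Hact]]]]].
  destruct HA2 as [[dphi [Hdphi _]] Hmon].
  set (c := fun l => C n l).
  assert (Hc : forall l, (l < K)%nat -> 0 <= c l).
  { intros l Hl. unfold c. destruct (HC01 n l Hn Hl) as [-> | ->]; lra. }
  (* the active constraint involves some link j0 *)
  destruct (Rsum_pos_term K (fun l => C n l * p l)) as [j0 [Hj0 Hpos]].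
  { change (0 < matvec K C p n). rewrite Hact. auto. }
  assert (Hcj0 : 0 < c j0) by (pose proof (Hp j0 Hj0); unfold c; nra).
  destruct (dual_certificate K V z HVnn Hz p c j0 Hirr Hp Hc Hj0 Hcj0) as [y [Hy Hfix]].
  set (a := fun k => SIR K V z p k / gamma k).
  assert (Ha : forall k, (k < K)%nat -> 0 < a k).
  { intros k Hk. apply Rdiv_lt_0_compat; [apply SIR_pos; auto | auto]. }
  set (D := fun k => dphi (a k) * a k).
  assert (HD : forall k, (k < K)%nat -> 0 < D k).
  { intros k Hk. exact (proj1 (phi_log_tangent phi dphi Hdphi Hmon HA3 (a k) (Ha k Hk))). }
  exists (fun k => y k * p k / D k). split.
  { intros k Hk. pose proof (Hy k Hk). pose proof (Hp k Hk). pose proof (HD k Hk).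
    apply Rdiv_lt_0_compat; [nra | auto]. }
  intros x [p' [[Hp' Hp'C] Hcor']].
  apply Rle_trans with (Rsum K (fun k => y k * p k / D k * q k
             + y k * p k * (ln (SIR K V z p' k) - ln (SIR K V z p k)))).
  { apply Rsum_le. intros k Hk. rewrite (Hcor k Hk), (Hcor' k Hk).
    pose proof (Hy k Hk). pose proof (Hp k Hk).
    apply (weighted_phi_tangent phi dphi Hdphi Hmon HA3); auto; [nra | apply SIR_pos; auto..]. }
  rewrite Rsum_plus.
  pose proof (dual_log_SIR_bound K V z HVnn Hz p p' c y Hp Hp' Hc
                (fun k Hk => Rlt_le _ _ (Hy k Hk)) Hfix) as Hdual.
  change (Rsum K (fun l => c l * p' l)) with (matvec K C p' n) in Hdual.
  change (Rsum K (fun l => c l * p l)) with (matvec K C p n) in Hdual.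
  pose proof (Hp'C n Hn). lra.
Qed.

Lemma slack_scaling_feasible (K N : nat) (C : nat -> nat -> R) (phat p : nat -> R) :
  (forall n k, (n < N)%nat -> (k < K)%nat -> C n k = 0 \/ C n k = 1) ->
  (forall n, (n < N)%nat -> 0 < phat n) ->
  (forall k, (k < K)%nat -> 0 < p k) ->
  (forall n, (n < N)%nat -> matvec K C p n < phat n) ->
  exists e, 0 < e /\ in_Pplus K N C phat (fun l => (1 + e) * p l).
Proof.
  intros HC01 Hphat Hp Hslack.
  destruct (finite_pos_lower_bound N (fun n => (phat n - matvec K C p n) / phat n))
    as [e [He Hen]].
  { intros n Hn. apply Rdiv_lt_0_compat; [pose proof (Hslack n Hn); lra | auto]. }
  exists e. split; [lra|]. split.
  - intros k Hk. pose proof (Hp k Hk). nra.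
  - intros n Hn. rewrite matvec_scal.
    assert (0 <= matvec K C p n).
    { apply matvec_nonneg; [intros l Hl; destruct (HC01 n l Hn Hl) as [-> | ->]; lra
                           | intros l Hl; apply Rlt_le, Hp, Hl]. }
    pose proof (Hen n Hn). pose proof (Hphat n Hn). pose proof (Hslack n Hn).
    assert (e * phat n <= phat n - matvec K C p n).
    { apply (Rmult_le_compat_r (phat n)) in H0; [|lra].
      replace ((phat n - matvec K C p n) / phat n * phat n)
        with (phat n - matvec K C p n) in H0 by (field; lra).
      lra. }
    nra.
Qed.

Lemma interior_point_not_maximal (K N : nat) (C : nat -> nat -> R) (phat : nat -> R)
  (V : nat -> nat -> R) (z gamma : nat -> R) (phi : R -> R)
  (HK : (0 < K)%nat)
  (HC01 : forall n k, (n < N)%nat -> (k < K)%nat -> C n k = 0 \/ C n k = 1)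
  (Hphat : forall n, (n < N)%nat -> 0 < phat n)
  (HVnn : forall k l, (k < K)%nat -> (l < K)%nat -> 0 <= V k l)
  (Hz : forall k, (k < K)%nat -> 0 < z k)
  (Hgamma : forall k, (k < K)%nat -> 0 < gamma k)
  (Hmon : forall x y, 0 < x -> x < y -> phi x < phi y)
  (q w : nat -> R) :
  in_F K N C phat V z gamma phi q -> ~ in_boundaryF K N C phat V z gamma phi q ->
  (forall k, (k < K)%nat -> 0 < w k) ->
  exists x, in_F K N C phat V z gamma phi x /\
    Rsum K (fun k => w k * q k) < Rsum K (fun k => w k * x k).
Proof.
  intros [p [[Hp HpC] Hcor]] Hnb Hw.
  assert (Hslack : forall n, (n < N)%nat -> matvec K C p n < phat n).
  { intros n Hn. destruct (HpC n Hn) as [Hlt|Heq]; [exact Hlt|].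
    exfalso. apply Hnb. exists p. repeat split; auto. exists n. auto. }
  destruct (slack_scaling_feasible K N C phat p HC01 Hphat Hp Hslack) as [e [He Hfeas]].
  set (p' := fun l => (1 + e) * p l).
  exists (fun k => phi (SIR K V z p' k / gamma k)). split.
  - exists p'. split; [exact Hfeas | intros k Hk; reflexivity].
  - apply Rsum_lt; [exact HK|]. intros k Hk.
    apply Rmult_lt_compat_l; [auto|]. rewrite (Hcor k Hk).
    pose proof (Hgamma k Hk). pose proof (SIR_scale_lt K V z HVnn Hz p e k Hp He Hk).
    apply Hmon.
    + apply Rdiv_lt_0_compat; [apply SIR_pos; auto | auto].
    + unfold Rdiv. apply Rmult_lt_compat_r; [apply Rinv_0_lt_compat; auto | exact H0].
Qed.

Theorem lemma1 (K N : nat) (C : nat -> nat -> R) (phat : nat -> R)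
  (V : nat -> nat -> R) (z gamma : nat -> R) (phi : R -> R)
  (HK : (2 <= K)%nat)
  (HC01 : forall n k, (n < N)%nat -> (k < K)%nat -> C n k = 0 \/ C n k = 1)
  (HCcol : forall k, (k < K)%nat -> exists n, (n < N)%nat /\ C n k = 1)
  (Hphat : forall n, (n < N)%nat -> 0 < phat n)
  (HVnn : forall k l, (k < K)%nat -> (l < K)%nat -> 0 <= V k l)
  (HVdiag : forall k, (k < K)%nat -> V k k = 0)
  (Hz : forall k, (k < K)%nat -> 0 < z k)
  (Hgamma : forall k, (k < K)%nat -> 0 < gamma k)
  (HA2 : A2 phi) (HA3 : A3 phi)
  (Hirr : irreducible K V)
  (q : nat -> R) (Hq : in_F K N C phat V z gamma phi q) :
  in_boundaryF K N C phat V z gamma phi q <->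
  exists w : nat -> R, (forall k, (k < K)%nat -> 0 < w k) /\
    forall x, in_F K N C phat V z gamma phi x ->
      Rsum K (fun k => w k * x k) <= Rsum K (fun k => w k * q k).
Proof.
  split.
  - apply boundary_point_maximises; assumption.
  - intros [w [Hw Hmax]]. apply NNPP. intros Hnb.
    destruct (interior_point_not_maximal K N C phat V z gamma phi ltac:(lia) HC01 Hphat
                HVnn Hz Hgamma (proj2 HA2) q w Hq Hnb Hw) as [x [Hx Hlt]].
    pose proof (Hmax x Hx). lra.
Qed.
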